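(* Let $d\ge 2$, let $\bm{k}_1,\ldots,\bm{k}_d\in\mathbb{R}^d$ be a basis of $\mathbb{R}^d$ with $\mathsf{K}=[\bm{k}_1,\ldots,\bm{k}_d]$, let $\mathsf{A}=[\bm{a}_1,\ldots,\bm{a}_d]=2\pi\mathsf{K}^{-T}$, and let $\mathfrak{a},\mathfrak{b}\in\mathbb{R}$. For $\bm{u}=[\alpha_1,\ldots,\alpha_d,\beta_1,\ldots,\beta_d]^T\in\mathbb{C}^{2d}$ and $\bm{x}\in\mathbb{R}^d$ let $p(\bm{x};\bm{u})=\sum_{j=1}^d\alpha_j e^{i\bm{k}_j\cdot\bm{x}}+\beta_j e^{-i\bm{k}_j\cdot\bm{x}}$, $\psi(\bm{x};\bm{u})=\mathfrak{a}|p(\bm{x};\bm{u})|^2-\mathfrak{b}|\nabla_{\bm{x}}p(\bm{x};\bm{u})|^2$, and let $\mathsf{Q}(\bm{0})$ be the Hermitian matrix with $\psi(\bm{0};\bm{u})=\bm{u}^*\mathsf{Q}(\bm{0})\bm{u}$. Let $\bm{u}=[\bm{v};\pm\bm{v}]$ (with $\bm{v}\in\mathbb{R}^d$ and a fixed choice of sign) be a real unit-norm eigenvector of $\mathsf{Q}(\bm{0})$ with eigenvalue $\lambda$, and let $Z=\{j: v_j=0\}$. If $Z\neq\emptyset$, then $$\{\bm{k}_j: j\notin Z\}^\perp=\operatorname{span}\{\bm{a}_j: j\in Z\}\subset L_{\lambda,\bm{u}},$$ where $L_{\lambda,\bm{u}}=\{\bm{x}\in\mathbb{R}^d:\psi(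\bm{x};\bm{u})=\lambda\}$.
   Context: $[\bm{v};\pm\bm{v}]$ denotes the vector of $\mathbb{R}^{2d}$ obtained by stacking $\bm{v}$ on top of $\pm\bm{v}$. $S^\perp$ denotes the orthogonal complement in $\mathbb{R}^d$ of the set $S$. *)

From HB Require Import structures.
From mathcomp Require Import all_boot all_order all_algebra.
From mathcomp Require Import all_classical all_reals.
From mathcomp Require Import topology normedtype derive trigo.
From mathcomp Require complex.
Import complex.
Set Implicit Arguments. Unset Strict Implicit. Unset Printing Implicit Defensive.
Import Order.TTheory GRing.Theory Num.Theory.
Import numFieldNormedType.Exports.
Local Open Scope ring_scope.
Local Open Scope classical_set_scope.

Section Defs.
Variable R : realType.
Variable d : nat.

Definition eix (t : R) : R[i] := Complex (cos t) (sin t).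

Definition cabs2 (z : R[i]) : R := complex.Re z ^+ 2 + complex.Im z ^+ 2.

Definition dotv (y x : 'cV[R]_d) : R := \sum_(m < d) y m 0 * x m 0.

Definition kdot (K : 'M[R]_d) (j : 'I_d) (x : 'cV[R]_d) : R := dotv (col j K) x.

(* u = [alpha_1..alpha_d, beta_1..beta_d]^T in C^{2d};
   p(x;u) = sum_j alpha_j e^{i k_j.x} + beta_j e^{-i k_j.x} *)
Definition pfun (K : 'M[R]_d) (u : 'cV[R[i]]_(d + d)) (x : 'cV[R]_d) : R[i] :=
  \sum_(j < d) (u (lshift d j) 0 * eix (kdot K j x)
                + u (rshift d j) 0 * eix (- kdot K j x)).

Definition dpart (f : 'cV[R]_d -> R) (x : 'cV[R]_d) (m : 'I_d) : R :=
  derive f x (delta_mx m 0 : 'cV[R]_d).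

Definition gradp_sq (K : 'M[R]_d) (u : 'cV[R[i]]_(d + d)) (x : 'cV[R]_d) : R :=
  \sum_(m < d) (dpart (fun y => complex.Re (pfun K u y)) x m ^+ 2
                + dpart (fun y => complex.Im (pfun K u y)) x m ^+ 2).

Definition psi (a b : R) (K : 'M[R]_d) (u : 'cV[R[i]]_(d + d)) (x : 'cV[R]_d) : R :=
  a * cabs2 (pfun K u x) - b * gradp_sq K u x.

Definition adjmx m n (M : 'M[R[i]]_(m, n)) : 'M[R[i]]_(n, m) :=
  (map_mx (@conjc R) M)^T.

Definition stackv (s : bool) (v : 'cV[R]_d) : 'cV[R[i]]_(d + d) :=
  col_mx (map_mx (fun r => (r%:C)%C) v) (map_mx (fun r => (((-1) ^+ s * r)%:C)%C) v).

Definition cnorm2 (u : 'cV[R[i]]_(d + d)) : R := \sum_(i < d + d) cabs2 (u i 0).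

Definition Amx (K : 'M[R]_d) : 'M[R]_d := (2 * pi) *: (invmx K)^T.

Definition orthc (S : set 'cV[R]_d) : set 'cV[R]_d :=
  [set x | forall y, S y -> dotv y x = 0].

Definition spanf (Z : set 'I_d) (f : 'I_d -> 'cV[R]_d) : set 'cV[R]_d :=
  [set x | exists c : 'I_d -> R,
           x = \sum_(j < d | `[< Z j >]) c j *: f j].

Definition levelset (a b : R) (K : 'M[R]_d) (u : 'cV[R[i]]_(d + d)) (lam : R[i])
  : set 'cV[R]_d := [set x | ((psi a b K u x)%:C)%C = lam].

End Defs.

From HB Require Import structures.
From mathcomp Require Import all_boot all_order all_algebra.
From mathcomp Require Import all_classical all_reals.
From mathcomp Require Import topology normedtype derive trigo.
From mathcomp Require complex.
Import complex.
From mathcomp Require Import ring.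
Import Order.TTheory GRing.Theory Num.Theory.
Local Open Scope ring_scope.
Local Open Scope classical_set_scope.

(* The duality [K^T A = 2 pi I] makes [k_j . a_l = 2 pi delta_jl], so the
   orthogonal complement of [{k_j : j notin Z}] is the span of
   [{a_j : j in Z}].  For [x] in it, every exponential of [p] with a nonzero
   coefficient ([j notin Z]) is constant along [x], while those with [j in Z]
   have zero coefficients; hence [p(. + x; u) = p(.; u)], so
   [psi(x; u) = psi(0; u) = u^* Q u = lambda |u|^2 = lambda]. *)

Section Lattice.
Variables (R : realType) (d : nat).

Lemma dotv_col (K : 'M[R]_d) j (x : 'cV[R]_d) :
  dotv (col j K) x = (K^T *m x) j 0.
Proof. by rewrite /dotv mxE; apply: eq_bigr => m _; rewrite !mxE. Qed.

Lemma sum_scale_col (P : pred 'I_d) (c : 'I_d -> R) (M : 'M[R]_d) :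
  \sum_(j < d | P j) c j *: col j M = M *m \col_j (if P j then c j else 0).
Proof.
apply/matrixP => r k; rewrite summxE !mxE big_mkcond /=.
by apply: eq_bigr => j _; rewrite !mxE; case: (P j); rewrite ?mulr0 // mulrC.
Qed.

Variables (K : 'M[R]_d) (hK : K \in unitmx).

Lemma trmx_mul_Amx : K^T *m Amx K = (2 * pi) *: 1%:M.
Proof. by rewrite /Amx -scalemxAr -trmx_mul mulVmx // trmx1. Qed.

Lemma Amx_mul_trmx : Amx K *m K^T = (2 * pi) *: 1%:M.
Proof. by rewrite /Amx -scalemxAl -trmx_mul mulmxV // trmx1. Qed.

Lemma dotv_col_Amx j (w : 'cV[R]_d) :
  dotv (col j K) (Amx K *m w) = 2 * pi * w j 0.
Proof. by rewrite dotv_col mulmxA trmx_mul_Amx -scalemxAl mul1mx !mxE. Qed.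

Lemma orthc_col_spanf_Amx (Z : set 'I_d) :
  orthc [set col j K | j in ~` Z] = spanf Z (fun j => col j (Amx K)).
Proof.
have pi2_neq0 : (2 * pi : R) != 0 by rewrite gt_eqF // mulr_gt0 // pi_gt0.
apply/seteqP; split => x /=.
  move=> x_orth; exists (fun j => dotv (col j K) x / (2 * pi)).
  rewrite sum_scale_col.
  have -> : \col_j (if `[< Z j >] then dotv (col j K) x / (2 * pi) else 0)
      = (2 * pi)^-1 *: (K^T *m x).
    apply/matrixP => j k; rewrite [LHS]mxE [RHS]mxE (ord1 k).
    case: asboolP => [_ | Zj]; first by rewrite dotv_col mulrC.
    by rewrite -dotv_col (x_orth _ (ex_intro2 _ _ j Zj erefl)) mulr0.
  by rewrite -scalemxAr mulmxA Amx_mul_trmx -scalemxAl mul1mx scalerA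
    mulVf // scale1r.
move=> [c ->] _ [j Zj <-].
by rewrite sum_scale_col dotv_col_Amx mxE; case: asboolP => // _; rewrite mulr0.
Qed.

End Lattice.

Section Periodicity.
Variables (R : realType) (d : nat).

Lemma dpart_shift (f : 'cV[R]_d -> R) (x : 'cV[R]_d) m :
  (forall y, f (y + x) = f y) -> dpart f x m = dpart f 0 m.
Proof.
move=> f_per; rewrite /dpart /derive; do 2 f_equal; apply: funext => h /=.
by rewrite /shift /= f_per addr0 -{1}(add0r x) f_per.
Qed.

Lemma psi_shift a b (K : 'M[R]_d) (u : 'cV[R[i]]_(d + d)) (x : 'cV[R]_d) :
  (forall y, pfun K u (y + x) = pfun K u y) -> psi a b K u x = psi a b K u 0.
Proof.
move=> p_per; rewrite /psi /gradp_sq -{1}(add0r x) p_per.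
congr (_ - _ * _); apply: eq_bigr => m _.
rewrite (@dpart_shift (fun y => complex.Re (pfun K u y))) => [|y]; last by rewrite p_per.
by rewrite (@dpart_shift (fun y => complex.Im (pfun K u y))) // => y; rewrite p_per.
Qed.

Lemma kdotD (K : 'M[R]_d) j (y x : 'cV[R]_d) :
  kdot K j (y + x) = kdot K j y + kdot K j x.
Proof. by rewrite /kdot !dotv_col mulmxDr mxE. Qed.

Lemma pfun_shift (K : 'M[R]_d) (u : 'cV[R[i]]_(d + d)) (x : 'cV[R]_d) :
  (forall j, kdot K j x = 0 \/ u (lshift d j) 0 = 0 /\ u (rshift d j) 0 = 0) ->
  forall y, pfun K u (y + x) = pfun K u y.
Proof.
move=> hx y; apply: eq_bigr => j _.
case: (hx j) => [kx0 | [-> ->]]; last by rewrite !mul0r.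
by rewrite kdotD kx0 addr0.
Qed.

Lemma stackv_lshift s (v : 'cV[R]_d) j : stackv s v (lshift d j) 0 = (v j 0)%:C%C.
Proof. by rewrite /stackv col_mxEu mxE. Qed.

Lemma stackv_rshift s (v : 'cV[R]_d) j :
  stackv s v (rshift d j) 0 = ((-1) ^+ s * v j 0)%:C%C.
Proof. by rewrite /stackv col_mxEd mxE. Qed.

End Periodicity.

Section Eigenvector.
Variables (R : realType) (d : nat).

Lemma adjmx_mulmx_cnorm2 (u : 'cV[R[i]]_(d + d)) :
  (adjmx u *m u) 0 0 = (cnorm2 u)%:C%C.
Proof.
rewrite /cnorm2 rmorph_sum !mxE; apply: eq_bigr => i _.
rewrite !mxE /cabs2; case: (u i 0) => re im.
by apply/eqP; rewrite eq_complex /=; apply/andP; split; apply/eqP; ring.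
Qed.

Lemma psi0_unit_eigenvector a b (K : 'M[R]_d) (Q : 'M[R[i]]_(d + d))
    (u : 'cV[R[i]]_(d + d)) lam :
  (forall u, (adjmx u *m Q *m u) 0 0 = (psi a b K u 0)%:C%C) ->
  cnorm2 u = 1 -> Q *m u = lam *: u -> (psi a b K u 0)%:C%C = lam.
Proof.
move=> hQ u_unit Qu.
by rewrite -hQ -mulmxA Qu -scalemxAr mxE adjmx_mulmx_cnorm2 u_unit mulr1.
Qed.

End Eigenvector.

Theorem lemma2p4 (R : realType) (d : nat) (hd : (2 <= d)%N)
  (K : 'M[R]_d) (hK : K \in unitmx) (a b : R)
  (Q : 'M[R[i]]_(d + d))
  (hQherm : adjmx Q = Q)
  (hQ : forall u : 'cV[R[i]]_(d + d),
      (adjmx u *m Q *m u) 0 0 = ((psi a b K u 0)%:C)%C)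
  (v : 'cV[R]_d) (s : bool) (lam : R[i])
  (hunit : cnorm2 (stackv s v) = 1)
  (heig : Q *m stackv s v = lam *: stackv s v)
  (hZ : exists j : 'I_d, v j 0 = 0) :
  let Z := [set j : 'I_d | v j 0 = 0] in
  orthc [set col j K | j in ~` Z] = spanf Z (fun j => col j (Amx K))
  /\ spanf Z (fun j => col j (Amx K)) `<=` levelset a b K (stackv s v) lam.
Proof.
move=> Z; rewrite -orthc_col_spanf_Amx //; split => // x x_orth.
rewrite /levelset /= psi_shift; first exact: psi0_unit_eigenvector hQ hunit heig.
apply: pfun_shift => j; case: (pselect (v j 0 = 0)) => [vj0 | Zj].
  by right; rewrite stackv_lshift stackv_rshift vj0 mulr0.
by left; apply: x_orth; exists j.
Qed.
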